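(* Let $s^1,\ldots,s^k$ be time series with $s^l=(s^l_1,\ldots,s^l_{m_l})\in\mathbb{Q}^{m_l}$. Define \[ U \coloneqq \max_{\substack{I_1,\ldots,I_k\\ I_l=[a_l,b_l],\ 1\le a_l\le b_l\le m_l}} \frac{\sum_{l\in[k]}\sum_{i\in I_l} s^l_i}{\sum_{l\in[k]}|I_l|},\qquad L \coloneqq \min_{\substack{I_1,\ldots,I_k\\ I_l=[a_l,b_l],\ 1\le a_l\le b_l\le m_l}} \frac{\sum_{l\in[k]}\sum_{i\in I_l} s^l_i}{\sum_{l\in[k]}|I_l|}, \] where $[a,b]=\{a,a+1,\ldots,b\}$. Let $z=(z_1,\ldots,z_n)$ be any mean of $s^1,\ldots,s^k$, i.e. a time series minimizing $F(z)=\frac1k\sum_{l=1}^k \mathrm{dtw}(z,s^l)^2$ over all time series. Then $L\le z_j\le U$ for all $j\in[n]$, and for every $l\in[k]$, \[ \mathrm{dtw}(s^l,z)^2\ \ge\ \sum_{i\in[m_l]} \begin{cases} (s^l_i-U)^2 & \text{if } s^l_i>U,\\ (s^l_i-L)^2 & \text{if } s^l_i<L,\\ 0 & \text{otherwise}.\end{cases} \] In particular $F(z)$ is at least $\frac1k$ times the sum over $l\in[k]$ of the right-hand side.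
   Context: A time series is a finite sequence $s=(s_1,\ldots,s_m)\in\mathbb{Q}^m$ for some $m\in\mathbb{N}$; $[m]=\{1,\ldots,m\}$. For $m,n\in\mathbb{N}$, a warping path of order $m\times n$ is a sequence of pairs $(i_1,j_1),\ldots,(i_p,j_p)\in[m]\times[n]$ with $(i_1,j_1)=(1,1)$, $(i_p,j_p)=(m,n)$, and each step $(i_{t+1},j_{t+1})-(i_t,j_t)\in\{(1,0),(0,1),(1,1)\}$. For time series $s\in\mathbb{Q}^m$, $s'\in\mathbb{Q}^n$, the cost of a warping path $P$ is $C_P(s,s')=\sum_{(i,j)\in P}(s_i-s'_j)^2$, and $\mathrm{dtw}(s,s')=\min_P\sqrt{C_P(s,s')}$ over all warping paths of order $m\times n$ (symmetric in the arguments). The Fréchet function of a sample $s^1,\ldots,s^k$ is $F(z)=\frac1k\sum_{l=1}^k\mathrm{dtw}(z,s^l)^2$, defined on all time series $z$ (of any length); a mean is a minimizer of $F$ (one always exists). *)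

From HB Require Import structures.
From mathcomp Require Import all_boot all_order all_algebra.
Set Implicit Arguments. Unset Strict Implicit. Unset Printing Implicit Defensive.
Import Order.TTheory GRing.Theory Num.Theory.
Local Open Scope ring_scope.

(* A time series is a nonempty sequence of rationals; entries are 1-indexed:
   ts_at s i = s_i for 1 <= i <= size s. *)
Definition tseries := seq rat.
Definition ts_at (s : tseries) (i : nat) : rat := nth 0 s i.-1.

Definition wstep (a b : nat * nat) : bool :=
  [|| b == (a.1.+1, a.2), b == (a.1, a.2.+1) | b == (a.1.+1, a.2.+1)].

Definition is_warping_path (m n : nat) (P : seq (nat * nat)) : bool :=
  match P with
  | [::] => false
  | x :: t => [&& x == (1, 1)%N, last x t == (m, n),
                 all (fun q : nat * nat => (1 <= q.1 <= m)%N && (1 <= q.2 <= n)%N) P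
               & path wstep x t]
  end.

Fixpoint gen_paths (k : nat) (x : nat * nat) : seq (seq (nat * nat)) :=
  match k with
  | 0 => [:: [:: x]]
  | k'.+1 => [:: x] :: flatten [seq [seq x :: t | t <- gen_paths k' y]
                               | y <- [:: (x.1.+1, x.2); (x.1, x.2.+1); (x.1.+1, x.2.+1)]]
  end.

(* every warping path of order m x n has at most m+n-1 <= m+n+1 elements, so this
   list contains all warping paths of order m x n *)
Definition warping_paths (m n : nat) : seq (seq (nat * nat)) :=
  [seq P <- gen_paths (m + n) (1, 1)%N | is_warping_path m n P].

Definition path_cost (s s' : tseries) (P : seq (nat * nat)) : rat :=
  \sum_(q <- P) (ts_at s q.1 - ts_at s' q.2) ^+ 2.

(* dtw2 s s' = dtw(s,s')^2 = min over warping paths P of C_P(s,s') *)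
Definition dtw2 (s s' : tseries) : rat :=
  match warping_paths (size s) (size s') with
  | [::] => 0
  | P :: Ps => foldr (fun Q acc => Num.min (path_cost s s' Q) acc) (path_cost s s' P) Ps
  end.

Definition frechet (k : nat) (s : 'I_k -> tseries) (z : tseries) : rat :=
  k%:R^-1 * \sum_(l < k) dtw2 z (s l).

Definition is_mean (k : nat) (s : 'I_k -> tseries) (z : tseries) : Prop :=
  (0 < size z)%N /\
  forall z' : tseries, (0 < size z')%N -> frechet s z <= frechet s z'.

Definition valid_intervals (k : nat) (s : 'I_k -> tseries) (a b : 'I_k -> nat) : Prop :=
  forall l : 'I_k, (1 <= a l)%N /\ (a l <= b l)%N /\ (b l <= size (s l))%N.

Definition interval_ratio (k : nat) (s : 'I_k -> tseries) (a b : 'I_k -> nat) : rat :=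
  (\sum_(l < k) \sum_(a l <= i < (b l).+1) ts_at (s l) i) /
  (\sum_(l < k) ((b l).+1 - a l)%:R).

Definition is_U (k : nat) (s : 'I_k -> tseries) (U : rat) : Prop :=
  (exists a b, valid_intervals s a b /\ interval_ratio s a b = U) /\
  (forall a b, valid_intervals s a b -> interval_ratio s a b <= U).

Definition is_L (k : nat) (s : 'I_k -> tseries) (L : rat) : Prop :=
  (exists a b, valid_intervals s a b /\ interval_ratio s a b = L) /\
  (forall a b, valid_intervals s a b -> L <= interval_ratio s a b).

Definition penalty (U L x : rat) : rat :=
  if U < x then (x - U) ^+ 2 else if x < L then (x - L) ^+ 2 else 0.

Definition lower_bound_l (U L : rat) (t : tseries) : rat :=
  \sum_(1 <= i < (size t).+1) penalty U L (ts_at t i).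

From HB Require Import structures.
From mathcomp Require Import all_boot all_order all_algebra.
From mathcomp Require Import zify ring lra.
Set Implicit Arguments. Unset Strict Implicit. Unset Printing Implicit Defensive.
Import Order.TTheory GRing.Theory Num.Theory.
Local Open Scope ring_scope.

(* Fix an entry z_j of a mean z and an optimal warping path between z and each s^l.  The
   entries of s^l aligned with z_j form an interval [a_l, b_l], and the cost of these paths
   depends on z_j only through sum_l sum_(a_l <= i <= b_l) (z_j - s^l_i)^2.  Replacing z_j by
   the average c of all these entries keeps the paths admissible and lowers that sum by
   N (z_j - c)^2, N being the number of aligned entries; minimality of the Frechet function
   at z thus forces z_j = c, an interval ratio, so L <= z_j <= U.  For the lower bound, each
   s^l_i is aligned with some z_j in [L, U], and (s^l_i - z_j)^2 dominates its penalty. *)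

Lemma wstepP (x y : nat * nat) : wstep x y ->
  [/\ (x.1 <= y.1 <= x.1.+1)%N, (x.2 <= y.2 <= x.2.+1)%N & y.1 = x.1 -> y.2 = x.2.+1].
Proof. by case: x y => [x1 x2] [y1 y2] /or3P [] /eqP [-> ->] /=; split; lia. Qed.

Lemma wstep_swap (x y : nat * nat) : wstep (swap_pair x) (swap_pair y) = wstep x y.
Proof.
case: x y => [x1 x2] [y1 y2]; rewrite /wstep /= !xpair_eqE.
by case: (y1 == _); case: (y2 == _); case: (y1 == _); case: (y2 == _).
Qed.

Lemma path_wstep_box (x : nat * nat) t : path wstep x t ->
  all (fun q : nat * nat => (x.1 <= q.1 <= (last x t).1)%N && (x.2 <= q.2 <= (last x t).2)%N)
    (x :: t).
Proof.
elim: t x => [|y t IH] x /=; first by rewrite !leqnn.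
move=> /andP [/wstepP [hx1 hx2 _] /IH /= /andP [/andP [hy1 hy2] hbox]].
apply/and3P; split; [lia | lia |].
by apply: sub_all hbox => q /=; lia.
Qed.

Lemma path_wstep_size (x : nat * nat) t : path wstep x t ->
  (size t + x.1 + x.2 <= (last x t).1 + (last x t).2)%N.
Proof.
elim: t x => [|y t IH] x //= /andP [/wstepP [hx1 hx2 hy2] /IH]; lia.
Qed.

Lemma path_wstep_cover (x : nat * nat) t i : path wstep x t ->
  (x.1 <= i <= (last x t).1)%N -> i \in map fst (x :: t).
Proof.
elim: t x => [|y t IH] x /=; first by move=> _ hi; rewrite inE; apply/eqP; lia.
move=> /andP [/wstepP [hx1 _ _] hp] hi; rewrite inE.
have [//|ne] := eqVneq i x.1; apply: IH hp _; lia.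
Qed.

Definition aligned (P : seq (nat * nat)) (j : nat) : seq nat := [seq q.2 | q <- P & q.1 == j].

Lemma path_wstep_aligned (x : nat * nat) t j : path wstep x t ->
  exists a, aligned (x :: t) j = iota a (size (aligned (x :: t) j)).
Proof.
elim: t x => [|y t IH] x /=.
  by move=> _; exists x.2; rewrite /aligned /=; case: eqP.
move=> /andP [/wstepP [hx1 _ hy2] hp]; have [a ha] := IH y hp.
rewrite [aligned _ j]/aligned [filter _ _]/= -!/(aligned _ j).
have [xj|] := eqVneq x.1 j; last by exists a.
exists x.2; rewrite /=; congr (_ :: _).
have [yj|ynj] := eqVneq y.1 j.
  have y2E : y.2 = x.2.+1 by apply: hy2; rewrite xj yj.
  by move: ha; rewrite /aligned /= yj eqxx /= => -[<- ->]; rewrite size_iota y2E.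
rewrite (_ : filter _ t = [::]) //.
apply/eqP; rewrite -[_ == _]negbK -has_filter; apply/hasPn => q qt.
by have := allP (path_wstep_box hp) q; rewrite inE qt orbT /= => /(_ isT); lia.
Qed.

Section WarpingPaths.
Variables (m n : nat) (P : seq (nat * nat)).
Hypothesis wP : is_warping_path m n P.

Lemma warping_path_bounds q : q \in P -> (1 <= q.1 <= m)%N && (1 <= q.2 <= n)%N.
Proof. by case: P wP => [|x t] // /and4P [_ _ /allP ha _]; apply: ha. Qed.

Lemma mem_warping_path_fst i : (i \in map fst P) = (1 <= i <= m)%N.
Proof.
apply/idP/idP => [/mapP [q /warping_path_bounds /andP [hq _] ->] //|].
case: P wP => [|x t] // /and4P [/eqP -> /eqP hl _ hp] hi.
by apply: path_wstep_cover hp _; rewrite hl.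
Qed.

Lemma warping_path_aligned j : (1 <= j <= m)%N ->
  exists a b, [/\ (1 <= a)%N, (a <= b <= n)%N & aligned P j = index_iota a b.+1].
Proof.
move=> hj; have [a ha] : exists a, aligned P j = iota a (size (aligned P j)).
  by case: P wP => [|x t] // /and4P [_ _ _ /path_wstep_aligned].
have r_gt0 : (0 < size (aligned P j))%N.
  have /mapP [q qP qj] : j \in map fst P by rewrite mem_warping_path_fst.
  by rewrite size_map size_filter -has_count; apply/hasP; exists q; rewrite // qj.
have bnd i : i \in aligned P j -> (1 <= i <= n)%N.
  by case/mapP => q /[!mem_filter] /andP [_ /warping_path_bounds /andP [_ ?]] ->.
set r := size (aligned P j) in ha r_gt0 *.
have /bnd ha1 : a \in aligned P j by rewrite ha mem_iota; lia.
have /bnd hb : (a + r).-1 \in aligned P j by rewrite ha mem_iota; lia.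
exists a, (a + r).-1; split; [lia | lia |].
by rewrite /index_iota prednK ?addn_gt0 ?r_gt0 ?orbT // addKn.
Qed.

End WarpingPaths.

Lemma warping_path_swap m n P :
  is_warping_path m n P -> is_warping_path n m (map swap_pair P).
Proof.
case: P => [|x t] //= /and4P [/eqP -> /eqP hl /andP [start_in ha] hp].
rewrite last_map hl (path_map (e' := wstep)) /=.
rewrite (eq_path (e' := wstep)) ?hp ?andbT; last by move=> ? ?; rewrite /= wstep_swap.
rewrite eqxx all_map /=; apply/andP; split; first by move: start_in => /=; lia.
by apply/allP => q /(allP ha) /=; lia.
Qed.

Lemma gen_paths_mem k x t : path wstep x t -> (size t <= k)%N -> x :: t \in gen_paths k x.
Proof.
elim: k x t => [|k IH] x [|y t] //=; rewrite ?inE ?eqxx //.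
move=> /andP [/or3P hs hp] hsz; rewrite !mem_cat; apply/orP; right.
have := map_f (cons x) (IH y t hp hsz).
by case: hs => /eqP <- ->; rewrite ?orbT.
Qed.

Lemma mem_warping_paths m n P : (P \in warping_paths m n) = is_warping_path m n P.
Proof.
rewrite mem_filter; case wP: (is_warping_path m n P) => //=.
case: P wP => [|x t] // /and4P [/eqP ex /eqP hl _ hp].
rewrite -ex gen_paths_mem //; have := path_wstep_size hp; rewrite hl ex /=; lia.
Qed.

Lemma warping_paths_nonempty m n : (0 < m)%N -> (0 < n)%N -> warping_paths m n != [::].
Proof.
have staircase i j : exists t, path wstep (1, 1)%N t /\ last (1, 1)%N t = (i.+1, j.+1).
  elim: i => [|i [t [hp hl]]].
    elim: j => [|j [t [hp hl]]]; first by exists [::].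
    by exists (rcons t (1, j.+2))%N; rewrite rcons_path last_rcons hp hl /wstep /= eqxx ?orbT.
  by exists (rcons t (i.+2, j.+1))%N; rewrite rcons_path last_rcons hp hl /wstep /= eqxx ?orbT.
case: m n => [|i] [|j] // _ _; have [t [hp hl]] := staircase i j.
suff : (1, 1)%N :: t \in warping_paths i.+1 j.+1 by case: warping_paths.
rewrite mem_warping_paths /= hl hp !eqxx andbT /=.
have /andP [_ box] := path_wstep_box hp; apply/allP => q /(allP box); rewrite hl /=; lia.
Qed.

Lemma dtw2E s s' : dtw2 s s' =
  if warping_paths (size s) (size s') is P0 :: Ps
  then \big[Order.min/path_cost s s' P0]_(Q <- Ps) path_cost s s' Q else 0.
Proof. by rewrite /dtw2; case: warping_paths => // P0 Ps; rewrite unlock. Qed.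

Lemma dtw2_le s s' P : is_warping_path (size s) (size s') P -> dtw2 s s' <= path_cost s s' P.
Proof.
rewrite -mem_warping_paths; case E: warping_paths => [|P0 Ps] //.
by rewrite dtw2E E inE => /predU1P [->|/ge_bigmin_seq ->]; rewrite ?bigmin_le_id.
Qed.

Lemma dtw2_attained s s' : warping_paths (size s) (size s') != [::] ->
  exists2 P, is_warping_path (size s) (size s') P & dtw2 s s' = path_cost s s' P.
Proof.
case E: warping_paths => [|P0 Ps] // _; rewrite dtw2E E big_seq.
have memE Q : (Q \in P0 :: Ps) = is_warping_path (size s) (size s') Q.
  by rewrite -E mem_warping_paths.
apply: (big_ind (fun v => exists2 P, is_warping_path (size s) (size s') P &
  v = path_cost s s' P)).
- by exists P0; rewrite // -memE mem_head.
- by move=> _ _ [Q1 hQ1 ->] [Q2 hQ2 ->]; case: leP => _; [exists Q1 | exists Q2].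
- by move=> Q hQ; exists Q; rewrite // -memE inE hQ orbT.
Qed.

Lemma path_cost_swap s s' P : path_cost s' s (map swap_pair P) = path_cost s s' P.
Proof. by rewrite /path_cost big_map; apply: eq_bigr => q _; rewrite -sqrrN opprB. Qed.

Lemma dtw2C s s' : dtw2 s s' = dtw2 s' s.
Proof.
suff le_dtw2 t t' : dtw2 t' t <= dtw2 t t' by apply: le_anti; rewrite !le_dtw2.
have [none|/dtw2_attained [P wP ->]] := eqVneq (warping_paths (size t) (size t')) [::].
  case E: (warping_paths (size t') (size t)) => [|Q Qs]; first by rewrite /dtw2 E none.
  have /warping_path_swap : is_warping_path (size t') (size t) Q.
    by rewrite -mem_warping_paths E mem_head.
  by rewrite -mem_warping_paths none.
by rewrite -path_cost_swap dtw2_le // warping_path_swap.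
Qed.

Lemma ler_sum_undup (R : numDomainType) (I : eqType) (r : seq I) (F : I -> R) :
  (forall i, 0 <= F i) -> \sum_(i <- undup r) F i <= \sum_(i <- r) F i.
Proof.
move=> F_ge0; elim: r => [|x r IH] //=; rewrite big_cons.
by case: ifP => _; rewrite ?big_cons ?lerD2l // (le_trans IH) ?lerDr.
Qed.

Lemma ler_sum_warping_path_fst (R : numDomainType) m n P (g : nat -> R) (f : nat * nat -> R) :
  is_warping_path m n P -> (forall i, 0 <= g i) -> {in P, forall q, g q.1 <= f q} ->
  \sum_(1 <= i < m.+1) g i <= \sum_(q <- P) f q.
Proof.
move=> wP g_ge0 gf.
have -> : \sum_(1 <= i < m.+1) g i = \sum_(i <- undup (map fst P)) g i.
  apply/perm_big/uniq_perm; rewrite ?iota_uniq ?undup_uniq // => i.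
  by rewrite mem_undup (mem_warping_path_fst wP) mem_iota; lia.
apply: le_trans (ler_sum_undup _ g_ge0) _.
by rewrite big_map big_seq [leRHS]big_seq; apply: ler_sum.
Qed.

Lemma penalty_ge0 U L x : 0 <= penalty U L x.
Proof. by rewrite /penalty; case: ifP => _; [|case: ifP => _]; rewrite ?sqr_ge0. Qed.

Lemma penalty_le_sqr U L x y : L <= y <= U -> penalty U L x <= (x - y) ^+ 2.
Proof.
move=> /andP [Ly yU]; rewrite /penalty.
case: ifP => [Ux|_]; first nra.
by case: ifP => [xL|_]; [nra | rewrite sqr_ge0].
Qed.

Lemma lower_bound_le_dtw2 U L t z : (0 < size t)%N -> (0 < size z)%N ->
  (forall j, (1 <= j <= size z)%N -> L <= ts_at z j <= U) -> lower_bound_l U L t <= dtw2 t z.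
Proof.
move=> t_gt0 z_gt0 z_in; have [P wP ->] := dtw2_attained (warping_paths_nonempty t_gt0 z_gt0).
apply: (ler_sum_warping_path_fst wP) => [i | q /(warping_path_bounds wP) /andP [_ q2]].
  exact: penalty_ge0.
exact/penalty_le_sqr/z_in.
Qed.

Lemma sum_sqr_devE (R : comPzRingType) (I : finType) (a b : I -> nat) (w : I -> nat -> R) c x :
  c * \sum_l (b l - a l)%:R = \sum_l \sum_(a l <= i < b l) w l i ->
  \sum_l \sum_(a l <= i < b l) (x - w l i) ^+ 2 =
  \sum_l \sum_(a l <= i < b l) (c - w l i) ^+ 2 + (x - c) ^+ 2 * \sum_l (b l - a l)%:R.
Proof.
move=> mean_c.
have cross : \sum_l \sum_(a l <= i < b l) (c - w l i) = 0.
  under eq_bigr do rewrite sumrB sumr_const_nat -mulr_natr.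
  by rewrite sumrB -mulr_sumr mean_c subrr.
transitivity (\sum_l \sum_(a l <= i < b l)
    ((c - w l i) ^+ 2 + ((x - c) ^+ 2 + 2 * (x - c) * (c - w l i)))).
  by apply: eq_bigr => l _; apply: eq_bigr => i _; ring.
under eq_bigr do rewrite big_split /= big_split /= sumr_const_nat -mulr_sumr.
rewrite big_split /= big_split /= -mulr_sumr cross mulr0 addr0 mulr_sumr.
by congr (_ + _); apply: eq_bigr => l _; rewrite mulr_natr.
Qed.

Lemma sum_sqr_dev_le_eq (R : realFieldType) (I : finType) (a b : I -> nat)
    (w : I -> nat -> R) c x :
  0 < \sum_l (b l - a l)%:R :> R ->
  c * \sum_l (b l - a l)%:R = \sum_l \sum_(a l <= i < b l) w l i ->
  \sum_l \sum_(a l <= i < b l) (x - w l i) ^+ 2 <= \sum_l \sum_(a l <= i < b l) (c - w l i) ^+ 2 ->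
  x = c.
Proof.
move=> N_gt0 mean_c; rewrite (sum_sqr_devE x mean_c) gerDl pmulr_lle0 // => sqr_le0.
by apply/eqP; rewrite -subr_eq0 -sqrf_eq0 eq_le sqr_le0 sqr_ge0.
Qed.

Lemma ts_at_set_nth z j c i : (0 < i)%N -> (0 < j)%N ->
  ts_at (set_nth 0 z j.-1 c) i = if i == j then c else ts_at z i.
Proof.
move=> i_gt0 j_gt0; rewrite /ts_at nth_set_nth /=.
by have -> : (i.-1 == j.-1) = (i == j) by apply/eqP/eqP; lia.
Qed.

Lemma path_cost_aligned z t P j : path_cost z t P =
  \sum_(q <- P | q.1 != j) (ts_at z q.1 - ts_at t q.2) ^+ 2 +
  \sum_(i <- aligned P j) (ts_at z j - ts_at t i) ^+ 2.
Proof.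
rewrite /path_cost (bigID (fun q : nat * nat => q.1 != j)) /= big_map big_filter.
by congr (_ + _); apply: eq_big => [q|q /negPn /eqP ->] //=; rewrite negbK.
Qed.

Lemma path_cost_set_nth m n z t P j c : is_warping_path m n P -> (0 < j)%N ->
  path_cost (set_nth 0 z j.-1 c) t P =
  \sum_(q <- P | q.1 != j) (ts_at z q.1 - ts_at t q.2) ^+ 2 +
  \sum_(i <- aligned P j) (c - ts_at t i) ^+ 2.
Proof.
move=> wP j_gt0; rewrite (path_cost_aligned _ _ _ j) ts_at_set_nth ?eqxx //; congr (_ + _).
rewrite big_seq_cond [RHS]big_seq_cond; apply: eq_bigr => q /andP [qP qj].
have /andP [/andP [q1_gt0 _] _] := warping_path_bounds wP qP.
by rewrite ts_at_set_nth ?(negbTE qj).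
Qed.

Section MeanEntries.
Variables (k : nat) (s : 'I_k -> tseries) (z : tseries).
Hypotheses (k_gt0 : (0 < k)%N) (s_gt0 : forall l, (0 < size (s l))%N) (z_mean : is_mean s z).

Lemma mean_entry_interval_ratio j : (1 <= j <= size z)%N ->
  exists a b, valid_intervals s a b /\ ts_at z j = interval_ratio s a b.
Proof.
move=> j_in; have [z_gt0 z_min] := z_mean.
have /fin_all_exists [P optP] l : exists P,
    is_warping_path (size z) (size (s l)) P /\ dtw2 z (s l) = path_cost z (s l) P.
  by have [P] := dtw2_attained (warping_paths_nonempty z_gt0 (s_gt0 l)); exists P.
have /fin_all_exists [ab ab_spec] l : exists ab : nat * nat,
    [/\ (1 <= ab.1)%N, (ab.1 <= ab.2 <= size (s l))%N
      & aligned (P l) j = index_iota ab.1 ab.2.+1].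
  by have [a [b ?]] := warping_path_aligned (optP l).1 j_in; exists (a, b).
pose a l := (ab l).1; pose b l := (ab l).2.
have valid : valid_intervals s a b by move=> l; have [? /andP [? ?] _] := ab_spec l.
exists a, b; split => //.
pose c := interval_ratio s a b; pose z' := set_nth 0 z j.-1 c.
have size_z' : size z' = size z.
  by case/andP: j_in => j_gt0 j_le; rewrite size_set_nth prednK //; apply/maxn_idPr.
pose rest l := \sum_(q <- P l | q.1 != j) (ts_at z q.1 - ts_at (s l) q.2) ^+ 2.
pose dev y l := \sum_(a l <= i < (b l).+1) (y - ts_at (s l) i) ^+ 2.
have dtw2_z l : dtw2 z (s l) = rest l + dev (ts_at z j) l.
  by rewrite (optP l).2 (path_cost_aligned _ _ _ j); have [_ _ ->] := ab_spec l.
have dtw2_z' l : dtw2 z' (s l) <= rest l + dev c l.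
  have [wP _] := optP l; rewrite -size_z' in wP.
  rewrite (le_trans (dtw2_le wP)) // (path_cost_set_nth _ _ _ wP) ?(andP j_in).1 //.
  by have [_ _ ->] := ab_spec l.
have le_dev : \sum_l dev (ts_at z j) l <= \sum_l dev c l.
  have := z_min z'; rewrite size_z' /frechet ler_pM2l ?invr_gt0 ?ltr0n // => /(_ z_gt0) le_z.
  rewrite -(lerD2l (\sum_l rest l)) -!big_split /=.
  rewrite -(eq_bigr _ (fun l _ => dtw2_z l)); apply: le_trans le_z _.
  exact: ler_sum (fun l _ => dtw2_z' l).
have N_gt0 : 0 < \sum_l ((b l).+1 - a l)%:R :> rat.
  rewrite (bigD1 (Ordinal k_gt0)) //= ltr_wpDr ?sumr_ge0 // ltr0n.
  by have [_ /andP [? ?] _] := ab_spec (Ordinal k_gt0); rewrite /a /b; lia.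
have mean_c : c * \sum_l ((b l).+1 - a l)%:R = \sum_l \sum_(a l <= i < (b l).+1) ts_at (s l) i.
  by rewrite /c /interval_ratio divfK // gt_eqF.
exact: sum_sqr_dev_le_eq N_gt0 mean_c le_dev.
Qed.

End MeanEntries.

Theorem mainTheorem1 (k : nat) (s : 'I_k -> tseries) (U L : rat) (z : tseries) :
  (0 < k)%N ->
  (forall l : 'I_k, (0 < size (s l))%N) ->
  is_U s U -> is_L s L ->
  is_mean s z ->
  (forall j : nat, (1 <= j <= size z)%N -> L <= ts_at z j <= U) /\
  (forall l : 'I_k, lower_bound_l U L (s l) <= dtw2 (s l) z) /\
  k%:R^-1 * \sum_(l < k) lower_bound_l U L (s l) <= frechet s z.
Proof.
move=> k_gt0 s_gt0 [_ le_U] [_ ge_L] z_mean.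
have z_in j : (1 <= j <= size z)%N -> L <= ts_at z j <= U.
  move=> /(mean_entry_interval_ratio k_gt0 s_gt0 z_mean) [a [b [valid ->]]].
  by rewrite ge_L ?le_U.
have lb_dtw2 l : lower_bound_l U L (s l) <= dtw2 (s l) z.
  exact: lower_bound_le_dtw2 (s_gt0 l) z_mean.1 z_in.
split=> //; split=> //.
rewrite /frechet ler_pM2l ?invr_gt0 ?ltr0n //.
by apply: ler_sum => l _; rewrite dtw2C.
Qed.
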